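(* Let $n\geq 2$, $R>0$, $m$ a uniform (rotation-invariant) measure on $S^{n-1}_R$, $f:S^{n-1}_R\to[0,1]$ integrable, and $K:\mathbb{R}\to\mathbb{R}$ non-decreasing, bounded and measurable. Let $\sigma$ be a hyperplane through the origin not containing $r=(R,0,\ldots,0)$. Then for every $x \in S^{n-1}_R$, \[ \left|Kf^\sigma(x) - Kf^\sigma(\sigma x)\right| \geq \left|Kf(x) - Kf(\sigma x)\right|, \] where $Kg(x) = \int_{S^{n-1}_R} K(\langle x,y\rangle) g(y)\,dm(y)$.
   Context: $S^{n-1}_R = \{x\in\mathbb{R}^n:\|x\|=R\}$. Let $v$ be the unit normal of $\sigma$ with $\langle v,r\rangle>0$; $H^+_\sigma = \{x\in S^{n-1}_R : \langle x,v\rangle\geq 0\}$, $H^-_\sigma = \{x\in S^{n-1}_R:\langle x,v\rangle<0\}$; $\sigma x$ is the reflection of $x$ across $\sigma$. The polarization is $f^\sigma(x) = \max\{f(x),f(\sigma x)\}$ for $x\in H^+_\sigma$ and $f^\sigma(x)=\min\{f(x),f(\sigma x)\}$ for $x\in H^-_\sigma$. *)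

From HB Require Import structures.
From mathcomp Require Import all_boot all_order all_algebra.
From mathcomp Require Import all_classical all_reals all_analysis.
Set Implicit Arguments. Unset Strict Implicit. Unset Printing Implicit Defensive.
Import Order.TTheory GRing.Theory Num.Theory.
Import numFieldNormedType.Exports.
Local Open Scope classical_set_scope.
Local Open Scope ring_scope.

(* Conventions: R^n is modelled as row vectors 'rV[R]_n, equipped with the
   Borel sigma-algebra (generated by the open sets of the product topology). *)
Definition euclid (R : realType) (n : nat) : Type :=
  g_sigma_algebraType (@open 'rV[R]_n).

Definition dotp (R : realType) (n : nat) (x y : 'rV[R]_n) : R :=
  \sum_(i < n) x 0 i * y 0 i.

Definition sphere (R : realType) (n : nat) (rho : R) : set (euclid R n) :=
  [set x : 'rV[R]_n | Num.sqrt (dotp x x) = rho].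

Definition is_orthogonal_mx (R : realType) (n : nat) (Q : 'M[R]_n) : Prop :=
  Q *m Q^T = 1%:M.

Definition rpoint (R : realType) (n : nat) (rho : R) : 'rV[R]_n :=
  \row_(i < n) (if val i == 0%N then rho else 0).

(* reflection across the hyperplane sigma = v^perp, for a unit normal v *)
Definition refl (R : realType) (n : nat) (v x : 'rV[R]_n) : 'rV[R]_n :=
  x - (2 * dotp x v) *: v.

Definition polarize (R : realType) (n : nat) (v : 'rV[R]_n)
    (f : 'rV[R]_n -> R) (x : 'rV[R]_n) : R :=
  if 0 <= dotp x v then Num.max (f x) (f (refl v x))
  else Num.min (f x) (f (refl v x)).

Definition Kop (R : realType) (n : nat) (rho : R)
    (m : {measure set (euclid R n) -> \bar R}) (K : R -> R)
    (g : euclid R n -> R) (x : 'rV[R]_n) : R :=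
  Rintegral m (@sphere R n rho) (fun y => K (dotp x y) * g y).

(** The reflection [refl v] is an orthogonal map preserving the sphere, so
    [Kg(x) - Kg(sigma x)] is half the integral of [h(y) (g(y) - g(sigma y))]
    with [h(y) = K(<x,y>) - K(<x,sigma y>)].  As
    [<x,sigma y> = <x,y> - 2 <x,v> <y,v>] and [K] is non-decreasing, [h(y)] has
    the sign of [<x,v> <y,v>], while polarization gives [g(y) - g(sigma y)] the
    sign of [<y,v>].  Hence for [g = f^sigma] the integrand is
    [|h(y) (f(y) - f(sigma y))|] times the sign of [<x,v>], and the triangle
    inequality for integrals concludes. *)
From HB Require Import structures.
From mathcomp Require Import all_boot all_order all_algebra.
From mathcomp Require Import all_classical all_reals all_analysis.
From mathcomp Require Import ring lra.
Set Implicit Arguments. Unset Strict Implicit. Unset Printing Implicit Defensive.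
Import Order.TTheory GRing.Theory Num.Theory.
Import numFieldNormedType.Exports.
Local Open Scope classical_set_scope.
Local Open Scope ring_scope.

Section Reflection.
Variables (R : realType) (n : nat).
Implicit Types x y v : 'rV[R]_n.

Lemma dotpC x y : dotp x y = dotp y x.
Proof. by apply: eq_bigr => i _; rewrite mulrC. Qed.

Lemma dotpBZl x y v c : dotp (x - c *: v) y = dotp x y - c * dotp v y.
Proof.
rewrite /dotp mulr_sumr -sumrB; apply: eq_bigr => i _.
by rewrite !mxE mulrBl mulrA.
Qed.

Lemma dotp_reflE v x y :
  dotp (refl v x) y = dotp x y - 2 * dotp x v * dotp v y.
Proof. exact: dotpBZl. Qed.

Lemma dotp_refl_sym v x y : dotp (refl v x) y = dotp x (refl v y).
Proof.
rewrite dotp_reflE (dotpC x (refl v y)) dotp_reflE.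
by rewrite (dotpC y x) (dotpC v x) (dotpC y v) (dotpC v y); ring.
Qed.

Lemma refl_fix v y : dotp y v = 0 -> refl v y = y.
Proof. by move=> yv; rewrite /refl yv mulr0 scale0r subr0. Qed.

Definition reflmx v : 'M[R]_n := 1%:M - 2 *: (v^T *m v).

Lemma mulmx_trE x v : x *m v^T = (dotp x v)%:M.
Proof.
rewrite [LHS]mx11_scalar; congr (_%:M).
by rewrite !mxE; apply: eq_bigr => i _; rewrite mxE.
Qed.

Lemma reflmxE v x : x *m reflmx v = refl v x.
Proof.
rewrite /reflmx mulmxBr mulmx1 -scalemxAr mulmxA mulmx_trE mul_scalar_mx.
by rewrite /refl scalerA.
Qed.

Lemma trmx_reflmx v : (reflmx v)^T = reflmx v.
Proof.
apply/matrixP => i j; rewrite !mxE !big_ord1 !mxE eq_sym.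
by rewrite (mulrC (v 0 j)).
Qed.

Variable v : 'rV[R]_n.
Hypothesis unit_v : dotp v v = 1.

Lemma dotp_refl_normal y : dotp (refl v y) v = - dotp y v.
Proof. by rewrite dotp_reflE unit_v mulr1; lra. Qed.

Lemma reflK : involutive (refl v).
Proof.
move=> y; rewrite {1}/refl dotp_refl_normal /refl.
by rewrite mulrN scaleNr opprK subrK.
Qed.

Lemma dotp_refl_refl y : dotp (refl v y) (refl v y) = dotp y y.
Proof. by rewrite dotp_refl_sym reflK. Qed.

Lemma reflmx_orthogonal : is_orthogonal_mx (reflmx v).
Proof.
rewrite /is_orthogonal_mx trmx_reflmx {1}/reflmx mulmxBl mul1mx.
rewrite -scalemxAl -mulmxA.
have -> : v *m reflmx v = v - 2 *: v by rewrite reflmxE /refl unit_v mulr1.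
rewrite /reflmx mulmxBr -scalemxAr.
by apply/matrixP => i j; rewrite !mxE; lra.
Qed.

End Reflection.

Section BoundedMeasurable.
Context {d} {T : measurableType d} {R : realType} (D : set T).

Definition bounded_measurable (G : T -> R) :=
  measurable_fun D G /\ exists B, forall y, D y -> `|G y| <= B.

Lemma bounded_measurableB G1 G2 :
  bounded_measurable G1 -> bounded_measurable G2 ->
  bounded_measurable (fun y => G1 y - G2 y).
Proof.
move=> [mG1 [B1 hB1]] [mG2 [B2 hB2]]; split.
  exact: measurable_realfun.measurable_funB.
exists (B1 + B2) => y Dy; apply: le_trans (ler_normB _ _) _.
by apply: lerD; [exact: hB1|exact: hB2].
Qed.

Lemma bounded_measurableM G1 G2 :
  bounded_measurable G1 -> bounded_measurable G2 ->
  bounded_measurable (fun y => G1 y * G2 y).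
Proof.
move=> [mG1 [B1 hB1]] [mG2 [B2 hB2]]; split.
  exact: measurable_realfun.measurable_funM.
exists (`|B1| * `|B2|) => y Dy; rewrite normrM.
by apply: ler_pM => //; apply: le_trans (ler_norm _); [exact: hB1|exact: hB2].
Qed.

Lemma bounded_measurable_norm G :
  bounded_measurable G -> bounded_measurable (fun y => `|G y|).
Proof.
move=> [mG [B hB]]; split; last by exists B => y Dy; rewrite normr_id; exact: hB.
exact: measurableT_comp (@measurable_realfun.normr_measurable R setT) mG.
Qed.

Hypothesis mD : measurable D.

Lemma bounded_measurable_integrable (mu : {measure set T -> \bar R}) G :
  (mu D < +oo)%E -> bounded_measurable G -> mu.-integrable D (EFin \o G).
Proof.
move=> muD [mG [B hB]]; apply: measurable_bounded_integrable => //.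
exists B; split; first exact: num_real.
by move=> M BM y Dy /=; apply: le_trans (hB y Dy) _; exact: ltW.
Qed.

Lemma Rintegral_bounded_measurableB (mu : {measure set T -> \bar R}) G1 G2 :
  (mu D < +oo)%E -> bounded_measurable G1 -> bounded_measurable G2 ->
  Rintegral mu D (fun y => G1 y - G2 y) = Rintegral mu D G1 - Rintegral mu D G2.
Proof.
move=> muD bG1 bG2.
by apply: RintegralB => //; apply: bounded_measurable_integrable.
Qed.

Variable phi : T -> T.
Hypotheses (mphi : measurable_fun setT phi) (phiD : phi @^-1` D = D).

Lemma bounded_measurable_comp G :
  bounded_measurable G -> bounded_measurable (G \o phi).
Proof.
have Dphi y : D y -> D (phi y) by rewrite -{1}phiD.
move=> [mG [B hB]]; split; last by exists B => y /Dphi; exact: hB.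
have mGT := (measurable_restrictT G mD).1 mG.
apply: (@eq_measurable_fun _ _ T R D ((G \_ D) \o phi)).
  by move=> y; rewrite inE => Dy /=; rewrite /patch mem_set //; exact: Dphi.
exact: measurableT_comp mGT (measurable_funTS mphi).
Qed.

Lemma Rintegral_comp_invariant (mu : {measure set T -> \bar R}) G :
  (mu D < +oo)%E ->
  (forall A, measurable A -> mu (phi @^-1` A) = mu A) ->
  bounded_measurable G -> Rintegral mu D (G \o phi) = Rintegral mu D G.
Proof.
move=> muD mu_phi bG.
have Dphi y : D y -> D (phi y) by rewrite -{1}phiD.
have GD_DE : {in D, G \_ D =1 G}.
  by move=> y; rewrite inE => Dy; rewrite /patch mem_set.
have GD_phiE : {in D, (G \_ D) \o phi =1 G \o phi}.
  by move=> y; rewrite inE => Dy; rewrite /= /patch mem_set //; exact: Dphi.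
(* [integral_pushforward] wants an integrand measurable on the whole space,
   hence the detour through the patch [G \_ D]. *)
rewrite -(eq_Rintegral _ GD_DE) -(eq_Rintegral _ GD_phiE) /Rintegral.
congr fine.
have mGD := (measurable_restrictT G mD).1 (proj1 bG).
have mEGD := (measurable_realfun.measurable_EFinP setT (G \_ D)).2 mGD.
have intGD : mu.-integrable (phi @^-1` D) ((EFin \o (G \_ D)) \o phi).
  rewrite phiD; apply: (eq_integrable mD (EFin \o (G \o phi))).
    by move=> y /GD_phiE /= ->.
  apply: (bounded_measurable_integrable muD).
  exact: bounded_measurable_comp.
have := integral_pushforward mphi mEGD intGD mD; rewrite phiD => <-.
apply: eq_measure_integral => A mA _.
exact: mu_phi.
Qed.

End BoundedMeasurable.

Section EuclideanBorel.
Variables (R : realType) (n : nat).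
Local Notation E := (euclid R n).

Lemma continuous_bigsum (T : topologicalType) (I : Type) (s : seq I)
    (F : I -> T -> R) :
  (forall i, continuous (F i)) -> continuous (fun y => \sum_(i <- s) F i y).
Proof.
move=> cF; elim: s => [|i s IH].
  under eq_fun do rewrite big_nil; exact: cst_continuous.
under eq_fun do rewrite big_cons.
by move=> y; exact: continuousD (cF i y) (IH y).
Qed.

Lemma continuous_dotpl (w : 'rV[R]_n) : continuous (dotp w).
Proof.
apply: continuous_bigsum => i y.
apply: (@continuousM _ _ (fun=> w 0 i) (fun y : 'rV[R]_n => y 0 i)).
  exact: cst_continuous.
exact: coord_continuous.
Qed.

Lemma continuous_dotpr (w : 'rV[R]_n) : continuous (fun y : 'rV[R]_n => dotp y w).
Proof. by under eq_fun do rewrite dotpC; exact: continuous_dotpl. Qed.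

Lemma continuous_refl (v : 'rV[R]_n) : continuous (refl v).
Proof.
move=> y; apply: (@continuousB _ _ _ id (fun z => (2 * dotp z v) *: v)) => //.
apply: continuousZr_tmp; apply: (@continuousM _ _ (fun=> 2) (fun z : 'rV[R]_n => dotp z v)).
  exact: cst_continuous.
exact: continuous_dotpr.
Qed.

Lemma continuous_norm_dotp : continuous (fun y : 'rV[R]_n => Num.sqrt (dotp y y)).
Proof.
move=> y; apply: (@continuous_comp _ _ _ (fun y : 'rV[R]_n => dotp y y)).
  apply: continuous_bigsum => i z.
  by apply: continuousM; exact: coord_continuous.
exact: sqrt_continuous.
Qed.

Lemma measurable_fun_continuous (phi : 'rV[R]_n -> R) (D : set E) :
  measurable D -> continuous phi -> measurable_fun D (phi : E -> R).
Proof.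
move=> mD /continuousP cphi.
apply: (measurability _ (measurable_realfun.RGenOpens.measurableE R)).
move=> _ [_ [a [b ->]] <-]; apply: measurableI => //.
by apply: sub_sigma_algebra; apply: cphi; exact: interval_open.
Qed.

Lemma measurable_refl (v : 'rV[R]_n) : measurable_fun setT (refl v : E -> E).
Proof.
apply: (@measurability _ _ E E setT (refl v) (@open 'rV[R]_n)) => //.
move=> _ [A oA <-]; rewrite setTI; apply: sub_sigma_algebra.
by move/continuousP: (@continuous_refl v); apply.
Qed.

Lemma measurable_sphere (rho : R) : measurable (@sphere R n rho).
Proof.
have := measurable_fun_continuous measurableT continuous_norm_dotp.
by move=> /(_ measurableT _ (measurable_set1 rho)); rewrite setTI.
Qed.

End EuclideanBorel.

Section SphereReflection.
Variables (R : realType) (n : nat) (rho : R).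
Local Notation E := (euclid R n).
Local Notation S := (@sphere R n rho).
Variables (m : {measure set E -> \bar R}) (v : 'rV[R]_n).
Hypothesis m_finite : (m setT < +oo)%E.
Hypothesis m_orthogonal_invariant : forall Q : 'M[R]_n, is_orthogonal_mx Q ->
  forall A : set E, measurable A -> m ((fun x : E => (x *m Q : E)) @^-1` A) = m A.
Hypothesis unit_v : dotp v v = 1.

Lemma refl_sphere (y : E) : S y -> S (refl v y).
Proof. by rewrite /sphere /= dotp_refl_refl. Qed.

Lemma preimage_refl_sphere : refl v @^-1` S = S.
Proof. by apply/seteqP; split => y /= /refl_sphere //; rewrite reflK. Qed.

Lemma sphere_measure_finite : (m S < +oo)%E.
Proof.
by apply: le_lt_trans m_finite; apply: le_measure; rewrite ?inE //; exact: measurable_sphere.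
Qed.

Lemma bounded_measurable_refl (G : E -> R) :
  bounded_measurable S G -> bounded_measurable S (G \o refl v).
Proof.
exact: (bounded_measurable_comp (@measurable_sphere R n rho)
  (@measurable_refl R n v) preimage_refl_sphere).
Qed.

Lemma Rintegral_refl (G : E -> R) :
  bounded_measurable S G -> Rintegral m S (G \o refl v) = Rintegral m S G.
Proof.
apply: (Rintegral_comp_invariant (@measurable_sphere R n rho)
  (@measurable_refl R n v) preimage_refl_sphere sphere_measure_finite).
move=> A mA; rewrite -(m_orthogonal_invariant (reflmx_orthogonal unit_v) mA).
by congr (m _); apply/funext => y; rewrite /= reflmxE.
Qed.

Definition side (y : 'rV[R]_n) : R := if 0 <= dotp y v then 1 else -1.

Lemma normr_side y : `|side y| = 1.
Proof. by rewrite /side; case: ifP; rewrite ?normrN normr1. Qed.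

Lemma polarize_diff (f : E -> R) (y : E) :
  polarize v f y - polarize v f (refl v y) = side y * `|f y - f (refl v y)|.
Proof.
rewrite /polarize /side dotp_refl_normal // reflK // oppr_ge0.
have [yv|yv|yv] := ltrgtP (dotp y v) 0.
- by have [] := lerP (f y) (f (refl v y)) => _; ring.
- by have [] := lerP (f y) (f (refl v y)) => _; ring.
- by rewrite refl_fix // !subrr normr0 mulr0.
Qed.

Lemma polarize_eq (f : E -> R) (y : E) :
  polarize v f y = f y \/ polarize v f y = f (refl v y).
Proof.
by rewrite /polarize; case: ifP => _; have [] := lerP (f y) (f (refl v y)); auto.
Qed.

Lemma bounded_measurable_polarize (f : E -> R) :
  bounded_measurable S f -> bounded_measurable S (polarize v f).
Proof.
move=> bf; have [mf [B hB]] := bf.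
have [mfr _] := bounded_measurable_refl bf.
have mS := @measurable_sphere R n rho.
split; last first.
  exists B => y Sy; have Sry := refl_sphere Sy.
  by case: (polarize_eq f y) => ->; apply: hB.
apply: measurable_fun_if => //.
- apply: (measurable_fun_bool true).
  have := measurable_fun_continuous mS (@continuous_dotpr _ _ v) mS
    (measurable_itv `[0, +oo[%R).
  congr measurable; apply/funext => y; apply/propext.
  by rewrite /preimage /= in_itv /= andbT.
- apply: measurable_funS mS _ (measurable_realfun.measurable_maxr mf mfr).
  by move=> y [].
- apply: measurable_funS mS _ (measurable_realfun.measurable_minr mf mfr).
  by move=> y [].
Qed.

End SphereReflection.

Section PolarizationKernel.
Variables (R : realType) (n : nat) (rho : R).
Local Notation E := (euclid R n).
Local Notation S := (@sphere R n rho).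
Variables (m : {measure set E -> \bar R}) (v : 'rV[R]_n).
Hypothesis m_finite : (m setT < +oo)%E.
Hypothesis m_orthogonal_invariant : forall Q : 'M[R]_n, is_orthogonal_mx Q ->
  forall A : set E, measurable A -> m ((fun x : E => (x *m Q : E)) @^-1` A) = m A.
Hypothesis unit_v : dotp v v = 1.
Variable K : R -> R.
Hypotheses (K_nondecreasing : {homo K : a b / a <= b})
  (K_bounded : exists M : R, forall t, `|K t| <= M)
  (K_measurable : measurable_fun setT K).
Variable x : 'rV[R]_n.

Local Notation bounded_measurable_refl :=
  (bounded_measurable_refl (rho := rho) unit_v).
Local Notation Rintegral_refl :=
  (Rintegral_refl m_finite m_orthogonal_invariant unit_v).
Local Notation bounded_measurable_polarize :=
  (bounded_measurable_polarize (rho := rho) unit_v).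

Lemma bounded_measurable_K_dotp (w : 'rV[R]_n) :
  bounded_measurable S (fun y : E => K (dotp w y)).
Proof.
split; last by case: K_bounded => M hM; exists M => y _.
apply: measurableT_comp K_measurable _.
exact: (measurable_fun_continuous (@measurable_sphere R n rho) (@continuous_dotpl _ _ w)).
Qed.

Definition Kdiff (y : E) : R := K (dotp x y) - K (dotp x (refl v y)).

Lemma bounded_measurable_Kdiff : bounded_measurable S Kdiff.
Proof.
apply: bounded_measurableB; first exact: bounded_measurable_K_dotp.
exact: bounded_measurable_refl (bounded_measurable_K_dotp x).
Qed.

Lemma bounded_measurable_Kdiff_refl_diff (f : E -> R) :
  bounded_measurable S f ->
  bounded_measurable S (fun y => Kdiff y * (f y - f (refl v y))).
Proof.
move=> bf; apply: bounded_measurableM; first exact: bounded_measurable_Kdiff.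
exact: bounded_measurableB bf (bounded_measurable_refl bf).
Qed.

Lemma Kop_refl_diff (g : E -> R) : bounded_measurable S g ->
  2 * (Kop rho m K g x - Kop rho m K g (refl v x)) =
  Rintegral m S (fun y => Kdiff y * (g y - g (refl v y))).
Proof.
move=> bg.
have mS := @measurable_sphere R n rho.
have mSfin := sphere_measure_finite rho m_finite.
pose F1 y := K (dotp x y) * g y.
pose F2 y := K (dotp x (refl v y)) * g y.
have bF1 : bounded_measurable S F1.
  exact: bounded_measurableM (bounded_measurable_K_dotp x) bg.
have bF2 : bounded_measurable S F2.
  exact: bounded_measurableM (bounded_measurable_refl (bounded_measurable_K_dotp x)) bg.
pose F y := F1 y - F2 y.
have bF : bounded_measurable S F by exact: bounded_measurableB.
have -> : Kop rho m K g x - Kop rho m K g (refl v x) = Rintegral m S F.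
  rewrite Rintegral_bounded_measurableB //.
  by congr (_ - _); apply: eq_Rintegral => y _; rewrite /F2 dotp_refl_sym.
have -> : Rintegral m S (fun y => Kdiff y * (g y - g (refl v y))) =
    Rintegral m S (fun y => F y + (F \o refl v) y).
  by apply: eq_Rintegral => y _; rewrite /F /F1 /F2 /Kdiff /= reflK //; ring.
rewrite [RHS]RintegralD //; try exact: bounded_measurable_integrable.
  by rewrite (Rintegral_refl bF); ring.
exact/bounded_measurable_integrable/bounded_measurable_refl.
Qed.
Lemma Kdiff_side (y : E) : 0 <= side v y * side v x * Kdiff y.
Proof.
rewrite /Kdiff -dotp_refl_sym dotp_reflE (dotpC v y) /side.
set t := dotp x y; set a := dotp y v; set b := dotp x v.
have K_le s : 0 <= s -> K (t - s) <= K t.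
  by move=> s0; apply: K_nondecreasing; lra.
have K_ge s : s <= 0 -> K t <= K (t - s).
  by move=> s0; apply: K_nondecreasing; lra.
have [a0|a0] := lerP 0 a; have [b0|b0] := lerP 0 b.
- by have := K_le (2 * b * a) ltac:(nra); lra.
- by have := K_ge (2 * b * a) ltac:(nra); lra.
- by have := K_ge (2 * b * a) ltac:(nra); lra.
- by have := K_le (2 * b * a) ltac:(nra); lra.
Qed.

Lemma Kdiff_polarize (f : E -> R) (y : E) :
  Kdiff y * (polarize v f y - polarize v f (refl v y)) =
  side v x * `|Kdiff y * (f y - f (refl v y))|.
Proof.
have := Kdiff_side y; rewrite (polarize_diff unit_v) normrM /side.
case: ifP => _; case: ifP => _ hs.
- by rewrite (@ger0_norm _ (Kdiff y)); [ring|lra].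
- by rewrite (@ler0_norm _ (Kdiff y)); [ring|lra].
- by rewrite (@ler0_norm _ (Kdiff y)); [ring|lra].
- by rewrite (@ger0_norm _ (Kdiff y)); [ring|lra].
Qed.

Lemma Kop_polarize_refl_diff (f : E -> R) : bounded_measurable S f ->
  2 * (Kop rho m K (polarize v f) x - Kop rho m K (polarize v f) (refl v x)) =
  side v x * Rintegral m S (fun y => `|Kdiff y * (f y - f (refl v y))|).
Proof.
move=> bf; rewrite Kop_refl_diff; last exact: bounded_measurable_polarize.
under eq_Rintegral do rewrite Kdiff_polarize.
apply: RintegralZl; first exact: measurable_sphere.
apply: bounded_measurable_integrable; first exact: measurable_sphere.
  exact: sphere_measure_finite.
exact/bounded_measurable_norm/bounded_measurable_Kdiff_refl_diff.
Qed.

Lemma Kop_refl_diff_le_polarize (f : E -> R) : bounded_measurable S f ->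
  `|Kop rho m K f x - Kop rho m K f (refl v x)|
    <= `|Kop rho m K (polarize v f) x - Kop rho m K (polarize v f) (refl v x)|.
Proof.
move=> bf; have bP := bounded_measurable_Kdiff_refl_diff bf.
have := le_normr_Rintegral (@measurable_sphere R n rho)
  (bounded_measurable_integrable (@measurable_sphere R n rho)
    (sphere_measure_finite rho m_finite) bP).
have := congr1 Num.norm (Kop_polarize_refl_diff bf).
have := congr1 Num.norm (Kop_refl_diff bf).
have int_ge0 : 0 <= Rintegral m S (fun y => `|Kdiff y * (f y - f (refl v y))|).
  by apply: Rintegral_ge0 => y _.
rewrite !normrM normr_side mul1r (@ger0_norm _ 2) // (ger0_norm int_ge0).
lra.
Qed.

End PolarizationKernel.

Theorem lemma11 (R : realType) (n : nat) (rho : R)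
    (m : {measure set (euclid R n) -> \bar R})
    (f : euclid R n -> R) (K : R -> R) (v : 'rV[R]_n) :
  (2 <= n)%N ->
  0 < rho ->
  (* m is a uniform (finite, rotation-invariant) measure on S^{n-1}_rho *)
  m (~` @sphere R n rho) = 0%E ->
  (m setT < +oo)%E ->
  (forall Q : 'M[R]_n, is_orthogonal_mx Q ->
     forall A : set (euclid R n), measurable A ->
       m ((fun x : euclid R n => (mulmx (x : 'rV[R]_n) Q : euclid R n)) @^-1` A) = m A) ->
  (* f : S^{n-1}_rho -> [0,1] integrable *)
  m.-integrable (@sphere R n rho) (EFin \o f) ->
  (forall x, @sphere R n rho x -> 0 <= f x <= 1) ->
  (* K non-decreasing, bounded, measurable *)
  {homo K : a b / a <= b} ->
  (exists M : R, forall t, `|K t| <= M) ->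
  measurable_fun setT K ->
  (* sigma = v^perp, v unit normal with <v, r> > 0 (so r \notin sigma) *)
  dotp v v = 1 ->
  0 < dotp v (rpoint n rho) ->
  forall x : 'rV[R]_n, @sphere R n rho x ->
    `|Kop rho m K f x - Kop rho m K f (refl v x)|
      <= `|Kop rho m K (polarize v f) x - Kop rho m K (polarize v f) (refl v x)|.
Proof.
move=> _ _ _ m_finite m_inv f_int f01 K_nd K_bd K_meas unit_v _ x _.
apply: (Kop_refl_diff_le_polarize m_finite m_inv unit_v K_nd K_bd K_meas).
split; first by apply/measurable_realfun.measurable_EFinP; case/integrableP: f_int.
by exists 1 => y /f01 /andP[f0 f1]; rewrite ger0_norm.
Qed.
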